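(* Let $n\ge 2$ and let $k_1,\dots,k_n$, $a_1,\dots,a_{n-1}$, $b_1,\dots,b_n$ be real or complex numbers ($3n-1$ parameters). Let $A_2$ be the $n\times n$ matrix with entries $$(A_2)_{ij}=\begin{cases} k_j b_j, & i\le j,\\ k_i a_j, & i>j.\end{cases}$$ Define $c_i=k_ib_i-k_{i+1}a_i$ for $i=1,\dots,n-1$, $c_0=1$, $c_n=b_n$; $d_i=k_ia_{i+1}b_i-k_{i+1}a_ib_{i+1}$ for $i=1,\dots,n-2$, $d_0=a_1$; $f_i=a_i-b_i$ for $i=2,\dots,n-1$; $g_i=k_i-k_{i+1}$ for $i=2,\dots,n-1$, $g_n=1$. Assume $k_n\neq 0$ and $c_i\neq 0$ for $i=1,\dots,n$. Then $A_2$ is invertible and its inverse $A_2^{-1}=[\alpha_{ij}]$ is the lower Hessenberg matrix with entries $$\alpha_{ij}=\begin{cases} \dfrac{k_{i-1}b_{i-1}-k_{i+1}a_{i-1}}{c_{i-1}c_i}, & i=j,\ i\neq 1,n,\\[2mm] \dfrac{1}{c_1}, & i=j=1,\\[2mm] \dfrac{k_{n-1}b_{n-1}}{k_nc_{n-1}c_n}, & i=j=n,\\[2mm] (-1)^{i+j}\dfrac{d_{j-1}\,g_i\prod_{\nu=j+1}^{i-1}k_\nu f_\nu}{\prod_{\nu=j-1}^{i}c_\nu}, & i-j\ge 1,\\[2mm] -\dfrac{1}{c_i}, & j-i=1,\\[2mm] 0, & j-i>1, \end{cases}$$ where the empty product $\prod_{\nu=j+1}^{i-1}k_\nu f_\nu$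 (case $i=j+1$) is taken to be $1$.
   Context: A lower Hessenberg matrix is a square matrix whose entries $(i,j)$ vanish whenever $j-i>1$. *)

From HB Require Import structures.
From mathcomp Require Import all_boot all_order all_algebra.
Set Implicit Arguments. Unset Strict Implicit. Unset Printing Implicit Defensive.
Import Order.TTheory GRing.Theory Num.Theory.
Local Open Scope ring_scope.

(* Parameters k_1..k_n, a_1..a_{n-1}, b_1..b_n are given as functions
   nat -> R indexed 1-based (as in the paper); values outside the relevant
   index ranges are never used. *)

Section Hess.
Variables (R : numFieldType) (n : nat) (k a b : nat -> R).

Definition A2 : 'M[R]_n :=
  \matrix_(i < n, j < n)
    if (i <= j)%N then k j.+1 * b j.+1 else k i.+1 * a j.+1.

Definition cc (i : nat) : R :=
  if i == 0%N then 1 else if i == n then b n else k i * b i - k i.+1 * a i.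

Definition dd (i : nat) : R :=
  if i == 0%N then a 1%N else k i * a i.+1 * b i - k i.+1 * a i * b i.+1.

Definition ff (i : nat) : R := a i - b i.

Definition gg (i : nat) : R := if i == n then 1 else k i - k i.+1.

Definition alpha (i j : nat) : R :=
  if i == j then
    if i == 1%N then (cc 1)^-1
    else if i == n then k n.-1 * b n.-1 / (k n * cc n.-1 * cc n)
    else (k i.-1 * b i.-1 - k i.+1 * a i.-1) / (cc i.-1 * cc i)
  else if (j < i)%N then
    (-1) ^+ (i + j) * dd j.-1 * gg i * (\prod_(j.+1 <= v < i) (k v * ff v))
      / (\prod_(j.-1 <= v < i.+1) cc v)
  else if j == i.+1 then - (cc i)^-1
  else 0.

Definition alphaM : 'M[R]_n := \matrix_(i < n, j < n) alpha i.+1 j.+1.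

End Hess.

From HB Require Import structures.
From mathcomp Require Import all_boot all_order all_algebra.
From mathcomp Require Import ring zify.
Import Order.TTheory GRing.Theory Num.Theory.
Local Open Scope ring_scope.

(* It suffices to show [A2 * alpha = 1].  Rows [i] and [i+1] of [A2] differ
   only in the columns [l <= i], so the difference of rows [i] and [i+1] of the
   product is [c_i alpha_ij + g_i S_ij], with the partial column sums
   [S_ij = sum_(l < i) a_l alpha_lj]; the last row of the product is
   [k_n (c_n alpha_nj + S_nj)].  Below the diagonal [alpha_ij = g_i beta_ij]
   and, by induction on [i], [S_ij = - c_i beta_ij], so these expressions
   vanish there; on and above the diagonal they are checked directly.
   Telescoping from the last row upwards then gives the identity matrix. *)

Lemma eq_from_telescope (V : zmodType) (f h : nat -> V) (m n : nat) :
  (forall i, (m <= i < n)%N -> f i - f i.+1 = h i - h i.+1) ->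
  f n = h n -> forall i, (m <= i <= n)%N -> f i = h i.
Proof.
move=> fh_sub fh_n i /andP[le_mi le_in].
have [t def_n] : exists t, (i + t)%N = n by exists (n - i)%N; rewrite subnKC.
elim: t i def_n le_mi le_in => [|t IHt] i def_n le_mi le_in.
  by move: fh_n; rewrite -def_n addn0.
have fh_i1 : f i.+1 = h i.+1 by apply: IHt; lia.
by apply: (addIr (- f i.+1)); rewrite fh_sub ?fh_i1 //; lia.
Qed.

Lemma invmx_right (R : comUnitRingType) (n : nat) (A B : 'M[R]_n) :
  A *m B = 1%:M -> invmx A = B.
Proof.
by move=> AB1; have [uA _] := mulmx1_unit AB1; rewrite -(mulKmx uA B) AB1 mulmx1.
Qed.

Section A2Inverse.
Variables (R : numFieldType) (n : nat) (k a b : nat -> R).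
Hypothesis n_ge2 : (2 <= n)%N.
Hypothesis kn_neq0 : k n != 0.
Hypothesis cc_neq0 : forall i : nat, (1 <= i <= n)%N -> cc n k a b i != 0.

Local Notation c := (cc n k a b).
Local Notation d := (dd k a b).
Local Notation f := (ff a b).
Local Notation g := (gg n k).
Local Notation alpha := (alpha n k a b).

Lemma cc0 : c 0 = 1. Proof. by []. Qed.

Lemma cc_n : c n = b n. Proof. by rewrite /cc eqxx; case: n n_ge2. Qed.

Lemma ccE i : (0 < i < n)%N -> c i = k i * b i - k i.+1 * a i.
Proof. by case/andP=> i_gt0 lt_in; rewrite /cc (gtn_eqF i_gt0) (ltn_eqF lt_in). Qed.

Lemma gg_n : g n = 1. Proof. by rewrite /gg eqxx. Qed.

Lemma ggE i : (i < n)%N -> g i = k i - k i.+1.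
Proof. by rewrite /gg => /ltn_eqF->. Qed.

Definition beta (i j : nat) : R :=
  (-1) ^+ (i + j) * d j.-1 * (\prod_(j.+1 <= v < i) (k v * f v))
    / (\prod_(j.-1 <= v < i.+1) c v).

Lemma alpha_lower i j : (j < i)%N -> alpha i j = g i * beta i j.
Proof. by move=> lt_ji; rewrite /alpha (gtn_eqF lt_ji) lt_ji /beta; ring. Qed.

Lemma alpha_super i : alpha i i.+1 = - (c i)^-1.
Proof. by rewrite /alpha (ltn_eqF (ltnSn i)) ltnNge leqnSn eqxx. Qed.

Lemma alpha_upper i j : (i.+1 < j)%N -> alpha i j = 0.
Proof.
move=> lt_i1j; have lt_ij := ltn_trans (ltnSn i) lt_i1j.
by rewrite /alpha (ltn_eqF lt_ij) ltnNge (ltnW lt_ij) (gtn_eqF lt_i1j).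
Qed.

Lemma alpha11 : alpha 1 1 = (c 1)^-1. Proof. by rewrite /alpha eqxx. Qed.

Lemma alpha_nn : alpha n n = k n.-1 * b n.-1 / (k n * c n.-1 * c n).
Proof. by rewrite /alpha eqxx; case: n n_ge2 => [|[|m]]. Qed.

Lemma alpha_diag i : (1 < i < n)%N ->
  alpha i i = (k i.-1 * b i.-1 - k i.+1 * a i.-1) / (c i.-1 * c i).
Proof. by case/andP=> lt_1i lt_in; rewrite /alpha eqxx (gtn_eqF lt_1i) (ltn_eqF lt_in). Qed.

Definition A2_entry (i l : nat) : R := if (i <= l)%N then k l * b l else k i * a l.

Definition prod_entry (i j : nat) : R := \sum_(1 <= l < n.+1) A2_entry i l * alpha l j.

Definition a_colsum (i j : nat) : R := \sum_(1 <= l < i) a l * alpha l j.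

Lemma a_colsum_succ i j : (0 < i)%N -> a_colsum i.+1 j = a_colsum i j + a i * alpha i j.
Proof. by move=> i_gt0; rewrite /a_colsum big_nat_recr. Qed.

Definition row_step (i j : nat) : R := c i * alpha i j + g i * a_colsum i j.

Lemma prod_entry_sub i j : (0 < i < n)%N -> prod_entry i j - prod_entry i.+1 j = row_step i j.
Proof.
case/andP=> i_gt0 lt_in; rewrite /prod_entry -sumrB.
rewrite (@big_cat_nat _ _ _ i) ?leqW ?(ltnW lt_in) //= [X in (_ + X)%R]big_ltn ?leqW //.
rewrite [X in (_ + (_ + X))%R]big_nat [X in (_ + (_ + X))%R]big1 ?addr0; last first.
  by move=> l /andP[lt_il _]; rewrite /A2_entry (ltnW lt_il) lt_il subrr.
rewrite /row_step /A2_entry leqnn ltnn ccE ?i_gt0 // ggE // /a_colsum mulr_sumr addrC.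
congr (_ + _); first by ring.
by apply: eq_big_nat => l /andP[_ lt_li]; rewrite leqNgt lt_li ltnNge (ltnW lt_li) /=; ring.
Qed.

Lemma prod_entry_last j : prod_entry n j = k n * row_step n j.
Proof.
rewrite /prod_entry /row_step big_nat_recr ?(ltnW n_ge2) //= cc_n gg_n mul1r mulrDr mulrA addrC.
congr (_ + _); first by rewrite /A2_entry leqnn.
rewrite /a_colsum mulr_sumr; apply: eq_big_nat => l /andP[_ lt_ln].
by rewrite /A2_entry leqNgt lt_ln /= mulrA.
Qed.

Lemma a_colsum_upper i j : (i < j)%N -> a_colsum i j = 0.
Proof.
move=> lt_ij; rewrite /a_colsum big_nat big1 // => l /andP[_ lt_li].
by rewrite alpha_upper ?mulr0 // (leq_ltn_trans lt_li).
Qed.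

Lemma a_colsum_diag i : (0 < i)%N -> a_colsum i.+1 i.+1 = - a i / c i.
Proof.
by move=> i_gt0; rewrite a_colsum_succ // a_colsum_upper // add0r alpha_super mulrN mulNr.
Qed.

Lemma beta_succ i j : (j < i)%N -> beta i.+1 j = - beta i j * (k i * f i) / c i.+1.
Proof.
move=> lt_ji; rewrite /beta big_nat_recr //= (@big_nat_recr _ _ _ i.+1) /=; last first.
  by rewrite (leq_trans (leq_pred j)) // ltnW // ltnW.
by rewrite addSn exprS invfM; ring.
Qed.

Lemma beta_subdiag j : beta j.+2 j.+1 = - d j / (c j * c j.+1 * c j.+2).
Proof.
have sign : (-1) ^+ (j.+2 + j.+1) = -1 :> R.
  by rewrite -signr_odd addSn addnn /= odd_double.
rewrite /beta big_geq // mulr1 sign.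
rewrite big_ltn; last lia.
rewrite big_ltn; last lia.
by rewrite big_ltn // big_geq //= mulr1 mulN1r mulrA.
Qed.

Lemma a_colsum_subdiag j : (j.+1 < n)%N -> a_colsum j.+2 j.+1 = - c j.+2 * beta j.+2 j.+1.
Proof.
move=> lt_j1n; have c_j2 : c j.+2 != 0 by rewrite cc_neq0.
rewrite a_colsum_succ // beta_subdiag.
case: j lt_j1n c_j2 => [|j] lt_j1n c_j2.
  rewrite {1}/a_colsum big_geq // add0r alpha11 /dd /= cc0.
  by field; rewrite c_j2 cc_neq0 //; lia.
have c_j : c j.+1 != 0 by apply: cc_neq0; lia.
have c_j1 : c j.+2 != 0 by apply: cc_neq0; lia.
rewrite a_colsum_diag // alpha_diag ?lt_j1n // /dd /= ccE ?lt_j1n // in c_j1 *.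
by field; rewrite c_j c_j1 c_j2.
Qed.

Lemma a_colsum_lower i j : (0 < j)%N -> (j < i <= n)%N -> a_colsum i j = - c i * beta i j.
Proof.
move=> j_gt0 /andP[]; elim: i => [//|i IHi].
rewrite ltnS leq_eqVlt => /orP[/eqP<- | lt_ji] le_i1n.
  by case: j j_gt0 {IHi} le_i1n => [//|j] _ le_j2n; rewrite a_colsum_subdiag.
have c_i1 : c i.+1 != 0 by apply: cc_neq0; lia.
rewrite a_colsum_succ ?IHi ?alpha_lower ?beta_succ //; try lia.
rewrite /ff ggE ?(ccE i); try lia.
by field.
Qed.

Lemma row_step_lower i j : (0 < j)%N -> (j < i <= n)%N -> row_step i j = 0.
Proof.
move=> j_gt0 /andP[lt_ji le_in].
by rewrite /row_step a_colsum_lower ?lt_ji // alpha_lower //; ring.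
Qed.

Lemma row_step_upper i j : (0 < i <= n)%N -> (i < j)%N -> row_step i j = - (i.+1 == j)%:R.
Proof.
move=> i_range lt_ij; rewrite /row_step a_colsum_upper // mulr0 addr0.
case: (ltngtP i.+1 j) => [lt_i1j | lt_ji1 | <-].
- by rewrite alpha_upper // mulr0 oppr0.
- by move: lt_ji1; rewrite ltnS leqNgt lt_ij.
- by rewrite alpha_super mulrN divff ?cc_neq0.
Qed.

Lemma row_step_diag i : (0 < i < n)%N -> row_step i i = 1.
Proof.
case/andP=> i_gt0 lt_in; have c_i : c i != 0 by apply: cc_neq0; lia.
rewrite /row_step; case: i i_gt0 lt_in c_i => [//|[|i]] _ lt_in c_i.
  by rewrite /a_colsum big_geq // mulr0 addr0 alpha11 divff.
have c_i1 : c i.+1 != 0 by apply: cc_neq0; lia.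
rewrite a_colsum_diag // alpha_diag ?lt_in // ggE // [c i.+1]ccE ?(ltnW lt_in) // in c_i1 *.
by field; rewrite c_i c_i1.
Qed.

Lemma row_step_last : row_step n n = (k n)^-1.
Proof.
have n1_gt0 : (0 < n.-1)%N by lia.
have c_n1 : c n.-1 != 0 by apply: cc_neq0; lia.
have b_n : b n != 0 by rewrite -cc_n cc_neq0 //; lia.
have := @a_colsum_diag _ n1_gt0; rewrite prednK ?(ltnW n_ge2) // /row_step => ->.
rewrite alpha_nn cc_n gg_n (ccE n.-1) ?prednK; try lia.
rewrite (ccE n.-1) ?prednK in c_n1; try lia.
by field; rewrite kn_neq0 b_n c_n1.
Qed.

Lemma row_step_delta i j : (0 < i < n)%N -> (0 < j <= n)%N ->
  row_step i j = (i == j)%:R - (i.+1 == j)%:R.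
Proof.
move=> /andP[i_gt0 lt_in] /andP[j_gt0 le_jn].
case: (ltngtP i j) => [lt_ij | lt_ji | <-].
- by rewrite row_step_upper ?i_gt0 ?(ltnW lt_in) // sub0r.
- by rewrite row_step_lower ?lt_ji ?(ltnW lt_in) // (gtn_eqF (ltn_trans lt_ji (ltnSn i))) subrr.
- by rewrite row_step_diag ?i_gt0 // (gtn_eqF (ltnSn i)) subr0.
Qed.

Lemma row_step_last_delta j : (0 < j <= n)%N -> row_step n j = (n == j)%:R / k n.
Proof.
case/andP=> j_gt0 le_jn; case: (ltnP j n) => [lt_jn | le_nj].
  by rewrite row_step_lower ?lt_jn ?leqnn // (gtn_eqF lt_jn) mul0r.
have -> : j = n by apply/eqP; rewrite eqn_leq le_jn le_nj.
by rewrite row_step_last eqxx mul1r.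
Qed.

Lemma prod_entry_delta i j : (0 < i <= n)%N -> (0 < j <= n)%N ->
  prod_entry i j = (i == j)%:R.
Proof.
move=> i_range j_range.
apply: (@eq_from_telescope _ (prod_entry^~ j) (fun l => (l == j)%:R) 1 n) => //.
  by move=> l l_range; rewrite prod_entry_sub // row_step_delta.
by rewrite prod_entry_last row_step_last_delta // mulrC divfK.
Qed.

Lemma A2_mul_alphaM : A2 n k a b *m alphaM n k a b = 1%:M.
Proof.
apply/matrixP => i j; rewrite !mxE.
have -> : \sum_(l < n) A2 n k a b i l * alphaM n k a b l j = prod_entry i.+1 j.+1.
  rewrite /prod_entry big_add1 /= big_mkord.
  by apply: eq_bigr => l _; rewrite !mxE /A2_entry ltnS.
by rewrite prod_entry_delta ?ltn_ord // eqSS.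
Qed.

End A2Inverse.

Theorem mainTheorem3 (R : numFieldType) (n : nat) (k a b : nat -> R) :
  (2 <= n)%N ->
  k n != 0 ->
  (forall i : nat, (1 <= i <= n)%N -> cc n k a b i != 0) ->
  A2 n k a b \in unitmx /\ invmx (A2 n k a b) = alphaM n k a b.
Proof.
move=> n_ge2 kn_neq0 cc_neq0.
have A2_alphaM := @A2_mul_alphaM R n k a b n_ge2 kn_neq0 cc_neq0.
by split; [case: (mulmx1_unit A2_alphaM) | apply: invmx_right].
Qed.
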